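(* For every rational number $q\in\mathbb{Q}$ there exists a connected graph $G$ with $\iota(G)=q$.
   Context: For a connected graph $G$ on vertices $v_1,\dots,v_n$, its distance matrix is $D=(d(v_i,v_j))_{i,j=1}^n$, where $d$ is the shortest-path distance; $\vec 1$ denotes the all-ones vector. $G$ is distance exceptional if $D\vec x=\vec 1$ has no solution. A curvature potential is a vector $\vec x$ with $D\vec x=\vec 1$. Curvature index $\iota(G)\in\mathbb{R}\cup\{\infty\}$: if $G$ is distance exceptional or has a curvature potential $\vec x$ with $\vec 1^\top\vec x\neq0$, then $\iota(G)$ is the unique real number with $\{D\vec x:\vec 1^\top\vec x=1\}\cap\mathbb{R}\vec 1=\{\iota(G)\vec 1\}$; otherwise $\iota(G)=\infty$. *)

From HB Require Import structures.
From mathcomp Require Import all_boot all_order all_algebra.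
From mathcomp Require Import reals.
Set Implicit Arguments. Unset Strict Implicit. Unset Printing Implicit Defensive.
Import Order.TTheory GRing.Theory Num.Theory.
Local Open Scope ring_scope.

Definition simple_graph (n : nat) (e : rel 'I_n) : Prop :=
  symmetric e /\ irreflexive e.

Definition connected_graph (n : nat) (e : rel 'I_n) : Prop :=
  (0 < n)%N /\ forall u v : 'I_n, connect e u v.

Fixpoint walk_of_len (n : nat) (e : rel 'I_n) (k : nat) (u v : 'I_n) : bool :=
  match k with
  | 0 => u == v
  | k'.+1 => [exists w, e u w && walk_of_len e k' w v]
  end.

(* shortest-path distance: least k with a walk of length k (for connected
   graphs on n vertices this is always < n). *)
Definition gdist (n : nat) (e : rel 'I_n) (u v : 'I_n) : nat :=
  find (fun k => walk_of_len e k u v) (iota 0 n).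

Definition distmx (R : realType) (n : nat) (e : rel 'I_n) : 'M[R]_n :=
  \matrix_(i, j) (gdist e i j)%:R.

Definition ones (R : realType) (n : nat) : 'cV[R]_n := const_mx 1.

Definition sumv (R : realType) (n : nat) (x : 'cV[R]_n) : R := \sum_i x i 0.

Definition distance_exceptional (R : realType) (n : nat) (e : rel 'I_n) : Prop :=
  ~ exists x : 'cV[R]_n, distmx R e *m x = ones R n.

Definition curvature_potential (R : realType) (n : nat) (e : rel 'I_n)
  (x : 'cV[R]_n) : Prop := distmx R e *m x = ones R n.

(* curvature index, as a relation: [curvature_index_is e i] means iota(G) = i,
   where i : option R, None standing for infinity. *)
Definition curvature_index_is (R : realType) (n : nat) (e : rel 'I_n)
  (i : option R) : Prop :=
  let finite_case :=
    distance_exceptional R e \/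
    exists x : 'cV[R]_n, curvature_potential e x /\ sumv x != 0 in
  (finite_case /\
     exists c : R, i = Some c /\
       (forall y : 'cV[R]_n,
          ((exists x : 'cV[R]_n, sumv x = 1 /\ distmx R e *m x = y) /\
           (exists t : R, y = t *: ones R n))
          <-> y = c *: ones R n))
  \/ (~ finite_case /\ i = None).

From HB Require Import structures.
From mathcomp Require Import all_boot all_order all_algebra.
From mathcomp Require Import reals.
From mathcomp Require Import zify ring.
Set Implicit Arguments. Unset Strict Implicit. Unset Printing Implicit Defensive.
Import Order.TTheory GRing.Theory Num.Theory.
Local Open Scope ring_scope.

(* A graph of diameter at most 2 has distance matrix [2J - 2I - A]; for a
   complete multipartite graph this is [J + B - 2I], with [B] the "same part"
   relation.  With [k] parts of size [s] and [m >= 1] singleton parts, a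
   curvature potential constant on each kind of part exists as soon as two
   linear equations hold, and since [D] is symmetric the curvature index of a
   graph with potential [x] is [1 / sumv x].  Writing [1/(q-1) = p/d] and
   choosing [s = 2d+2] and [k, m] with [k(d+1) - md = p] produces index [q]
   for every rational [q] other than [0] (a single vertex) and [1] (the path
   on three vertices). *)

Lemma find_iota0 (P : pred nat) n k : (k < n)%N -> P k ->
  (forall j, (j < k)%N -> ~~ P j) -> find P (iota 0 n) = k.
Proof.
move=> lt_kn Pk notP.
have -> : iota 0 n = iota 0 k ++ iota k (n - k) by rewrite -iotaD; congr iota; lia.
rewrite find_cat size_iota.
have -> : has P (iota 0 k) = false.
  by apply/negbTE/hasPn => j; rewrite mem_iota add0n => /notP.
have -> : (n - k = (n - k).-1.+1)%N by lia.
by rewrite /= Pk addn0.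
Qed.

Lemma walk_of_len1 n (e : rel 'I_n) u v : walk_of_len e 1 u v = e u v.
Proof.
apply/existsP/idP => [[w /andP [euw /eqP <-]] //|euv].
by exists v; rewrite euv eqxx.
Qed.

Lemma walk_of_len2 n (e : rel 'I_n) u v :
  walk_of_len e 2 u v = [exists w, e u w && e w v].
Proof. by apply: eq_existsb => w; congr (_ && _); exact: walk_of_len1. Qed.

Section DiameterTwo.

Variables (n : nat) (e : rel 'I_n).
Hypothesis common_neighbour :
  forall u v, u != v -> ~~ e u v -> exists w, e u w && e w v.

Lemma gdist_diameter2 u v : irreflexive e ->
  gdist e u v = if u == v then 0%N else if e u v then 1%N else 2%N.
Proof.
move=> e_irr; rewrite /gdist.
have lt_un := ltn_ord u; have lt_vn := ltn_ord v.
have [<-|uv] := eqVneq u v; first by apply: find_iota0 => //=; lia.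
have uv_nat : (u : nat) != v by [].
case: ifP => euv.
  apply: find_iota0 => //; first by lia.
    by rewrite walk_of_len1.
  by case.
have [w /andP [euw ewv]] := common_neighbour uv (negbT euv).
have wu : (w : nat) != u by apply: contraTneq euw => /val_inj ->; rewrite e_irr.
have wv : (w : nat) != v by apply: contraTneq ewv => /val_inj ->; rewrite e_irr.
have lt_wn := ltn_ord w.
apply: find_iota0; first by lia.
  by rewrite walk_of_len2; apply/existsP; exists w; rewrite euw.
by case=> [|[|]] // _; rewrite walk_of_len1 euv.
Qed.

Lemma connected_diameter2 : (0 < n)%N -> connected_graph e.
Proof.
split=> // u v; have [->|uv] := eqVneq u v; first exact: connect0.
case euv: (e u v); first exact: connect1.
have [w /andP [euw ewv]] := common_neighbour uv (negbT euv).
exact: connect_trans (connect1 euw) (connect1 ewv).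
Qed.

End DiameterTwo.

(* If [D y = t 1] with [sumv y = 1], then
   [t * sumv x0 = x0^T D y = (D x0)^T y = sumv y = 1]. *)
Lemma curvature_index_potential (R : realType) n (e : rel 'I_n) (x0 : 'cV[R]_n) :
  (distmx R e)^T = distmx R e -> curvature_potential e x0 -> sumv x0 != 0 ->
  curvature_index_is e (Some (sumv x0)^-1).
Proof.
move=> D_sym pot s0; left; split; first by right; exists x0.
have sumvE (x : 'cV[R]_n) : sumv x = ((ones R n)^T *m x) 0 0.
  by rewrite !mxE; apply: eq_bigr => i _; rewrite !mxE mul1r.
exists (sumv x0)^-1; split => // y; split.
- move=> [[x [sx1 <-]] [t Dx]]; rewrite Dx.
  suff ts : t * sumv x0 = 1 by rewrite -[t](mulfK s0) ts mul1r.
  have := congr1 (fun M : 'M[R]_1 => M 0 0) (mulmxA x0^T (distmx R e) x).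
  rewrite -{2}D_sym -trmx_mul pot Dx -sumvE sx1 -scalemxAr mxE /=.
  by rewrite !mxE => <-; congr (t * _); apply: eq_bigr => i _; rewrite !mxE mulr1.
- move=> ->; split; last by exists (sumv x0)^-1.
  exists ((sumv x0)^-1 *: x0); split; last by rewrite -scalemxAr pot.
  rewrite -(mulVf s0) /sumv mulr_sumr.
  by apply: eq_bigr => i _; rewrite mxE.
Qed.

Lemma sum_enum_val (V : nmodType) (T : finType) (F : T -> V) :
  \sum_(i < #|T|) F (enum_val i) = \sum_b F b.
Proof. by rewrite -big_enum_val; apply: eq_bigl => b; rewrite inE. Qed.

Section CompleteMultipartite.

Variables (T : finType) (P : eqType) (part : T -> P).

Definition multipartite : rel 'I_#|T| :=
  fun u v => part (enum_val u) != part (enum_val v).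

Lemma multipartite_simple : simple_graph multipartite.
Proof. by split=> [u v|u]; rewrite /multipartite ?eqxx // eq_sym. Qed.

Variable c : T.
Hypothesis part_c_singleton : forall b, part b = part c -> b = c.

Lemma multipartite_common_neighbour u v :
  u != v -> ~~ multipartite u v -> exists w, multipartite u w && multipartite w v.
Proof.
rewrite /multipartite negbK -(inj_eq enum_val_inj) => uv /eqP same_uv.
have part_u : part (enum_val u) != part c.
  apply/eqP => uc; move: uv.
  by rewrite (part_c_singleton uc) (part_c_singleton (etrans (esym same_uv) uc)) eqxx.
by exists (enum_rank c); rewrite enum_rankK part_u -same_uv eq_sym part_u.
Qed.

Lemma multipartite_connected : connected_graph multipartite.
Proof.
apply: (connected_diameter2 multipartite_common_neighbour).
by apply/card_gt0P; exists c.
Qed.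

Lemma distmx_multipartite (R : realType) i j :
  distmx R multipartite i j =
  1 + (part (enum_val i) == part (enum_val j))%:R - 2 * (i == j)%:R.
Proof.
rewrite mxE (gdist_diameter2 multipartite_common_neighbour); last first.
  by case: multipartite_simple.
have [->|_] := eqVneq i j; first by rewrite eqxx /=; ring.
by rewrite /multipartite; case: (_ == _) => /=; ring.
Qed.

Lemma distmx_multipartite_sym (R : realType) :
  (distmx R multipartite)^T = distmx R multipartite.
Proof.
by apply/matrixP => i j; rewrite mxE !distmx_multipartite eq_sym [j == _]eq_sym.
Qed.

Lemma distmx_multipartite_mul (R : realType) (g : T -> R) i :
  (distmx R multipartite *m \col_j g (enum_val j)) i 0 =
  \sum_b g b + \sum_(b | part b == part (enum_val i)) g b - 2 * g (enum_val i).
Proof.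
have diag : \sum_j (i == j)%:R * g (enum_val j) = g (enum_val i).
  rewrite (bigD1 i) //= eqxx mul1r big1 ?addr0 // => j ji.
  by rewrite eq_sym (negbTE ji) mul0r.
have same_part : \sum_b (part (enum_val i) == part b)%:R * g b =
                 \sum_(b | part b == part (enum_val i)) g b.
  rewrite [RHS]big_mkcond; apply: eq_bigr => b _.
  by rewrite eq_sym; case: (_ == _); rewrite ?mul1r ?mul0r.
rewrite mxE -diag -same_part -(sum_enum_val g) -(sum_enum_val (fun b => _ * g b)).
rewrite mulr_sumr -big_split -sumrB; apply: eq_bigr => j _.
by rewrite distmx_multipartite mxE /=; ring.
Qed.

End CompleteMultipartite.

Section Blocks.

Variables (k s m : nat).

Definition blocks : finType := (('I_k * 'I_s) + 'I_m)%type.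

Definition block (a : blocks) : 'I_k + 'I_m :=
  match a with inl (p, _) => inl p | inr j => inr j end.

Lemma block_singleton (j : 'I_m) b : block b = block (inr j) -> b = inr j.
Proof. by case: b => [[]|i] // [->]. Qed.

Variables (R : realType) (al be : R).

Definition block_weight (a : blocks) : R := if a is inl _ then al else be.

Lemma sum_block_weight : \sum_b block_weight b = (k * s)%:R * al + m%:R * be.
Proof.
rewrite big_sumType /= !sumr_const card_prod !card_ord.
by rewrite !mulr_natl.
Qed.

Lemma sum_block_weight_part a :
  \sum_(b | block b == block a) block_weight b = if a is inl _ then s%:R * al else be.
Proof.
rewrite big_sumType /=.
case: a => [[p j]|j] /=.
  rewrite [\sum_(i < m | _) _]big_pred0 // addr0.
  rewrite (eq_bigl (fun i => i.1 == p)); last by case.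
  have -> : \sum_(i : 'I_k * 'I_s | i.1 == p) al = \sum_(i1 | i1 == p) \sum_(i2 < s) al.
    by rewrite pair_big_dep; apply: eq_bigl => i; rewrite andbT.
  by rewrite big_pred1_eq sumr_const card_ord mulr_natl.
rewrite [\sum_(i | _) _]big_pred0 ?add0r; last by case.
by rewrite (eq_bigl (pred1 j)) ?big_pred1_eq // => i; rewrite /= inj_eq.
Qed.

End Blocks.

(* The last two hypotheses are [(D x)_v = 1] at a vertex of a block and at a
   singleton, for [x] equal to [al] on blocks and [be] on singletons. *)
Lemma multipartite_index (R : realType) k s m (al be S : R) :
  (0 < m)%N -> S != 0 ->
  (k * s)%:R * al + m%:R * be = S -> S + (s%:R - 2) * al = 1 -> S - be = 1 ->
  curvature_index_is (multipartite (@block k s m)) (Some S^-1).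
Proof.
move=> m_gt0 S_neq0 sum_weights eq_block eq_singleton.
have c_singleton := @block_singleton k s m (Ordinal m_gt0).
pose x : 'cV[R]_#|blocks k s m| := \col_j block_weight al be (enum_val j).
have sum_x : sumv x = S.
  rewrite -sum_weights -sum_block_weight -sum_enum_val.
  by apply: eq_bigr => j _; rewrite mxE.
have pot : curvature_potential (multipartite (@block k s m)) x.
  apply/matrixP => i j; rewrite ord1 (distmx_multipartite_mul c_singleton).
  rewrite sum_block_weight sum_block_weight_part sum_weights !mxE.
  case: (enum_val i) => [[p q]|q] /=.
    by rewrite -[RHS]eq_block; ring.
  by rewrite -[RHS]eq_singleton; ring.
rewrite -sum_x; apply: curvature_index_potential; rewrite ?sum_x //.
exact: (distmx_multipartite_sym c_singleton).
Qed.

Definition realizable_index (R : realType) (c : R) : Prop :=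
  exists (n : nat) (e : rel 'I_n),
    simple_graph e /\ connected_graph e /\ curvature_index_is e (Some c).

Lemma multipartite_realizable (R : realType) k s m (al be S : R) :
  (0 < m)%N -> S != 0 ->
  (k * s)%:R * al + m%:R * be = S -> S + (s%:R - 2) * al = 1 -> S - be = 1 ->
  realizable_index S^-1.
Proof.
move=> m_gt0 S_neq0 sum_weights eq_block eq_singleton.
exists #|blocks k s m|, (multipartite (@block k s m)).
split; first exact: multipartite_simple.
split; last exact: multipartite_index m_gt0 S_neq0 sum_weights eq_block eq_singleton.
exact: (multipartite_connected (@block_singleton k s m (Ordinal m_gt0))).
Qed.

Lemma realizable_index0 (R : realType) : realizable_index (0 : R).
Proof.
pose e : rel 'I_1 := fun _ _ => false.
have D0 : distmx R e = 0.
  by apply/matrixP => i j; rewrite !mxE !ord1 /gdist (@find_iota0 _ 1 0).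
exists 1%N, e; split; first by [].
split; first by split => // u v; rewrite !ord1 connect0.
left; split.
  left => -[x]; rewrite D0 mul0mx => /matrixP /(_ ord0 ord0) /eqP.
  by rewrite !mxE eq_sym oner_eq0.
exists 0; split => // y; rewrite scale0r; split.
  by move=> [[x [_ <-]] _]; rewrite D0 mul0mx.
move=> ->; split; last by exists 0; rewrite scale0r.
by exists (ones R 1); rewrite D0 mul0mx /sumv big_ord1 mxE.
Qed.

(* The path on three vertices, with potential [1/2] at its ends. *)
Lemma realizable_index1 (R : realType) : realizable_index (1 : R).
Proof.
rewrite -invr1; apply: (@multipartite_realizable R 1 2 1 2^-1 0) => //; last first.
- by rewrite subr0.
- by rewrite subrr mul0r addr0.
- by rewrite mul1n mulr0 addr0 mulfV // pnatr_eq0.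
- exact: oner_neq0.
Qed.

Lemma int_mulS_sub_mul (p : int) d : (0 < d)%N ->
  exists k m : nat, (0 < m)%N /\ p = (k * d.+1)%:Z - (m * d)%:Z.
Proof.
move=> d_gt0; have [p_gt0|p_le0] := ltrP 0 p.
  by exists `|p|%N, `|p|%N; split; lia.
exists (`|p| * d.-1 + d)%N, (`|p| * d + d.+1)%N; split; first by lia.
have -> : d = d.-1.+1 by lia.
nia.
Qed.

Lemma realizable_ratr (R : realType) (q : rat) :
  q != 0 -> q != 1 -> realizable_index (ratr q : R).
Proof.
move=> q_neq0 q_neq1.
have Q_neq0 : ratr q != 0 :> R by rewrite fmorph_eq0.
have Q1_neq0 : ratr q - 1 != 0 :> R.
  by rewrite subr_eq0 -(rmorph1 ratr) (inj_eq (fmorph_inj _)).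
pose r := (q - 1)^-1; pose d := `|denq r|%N.
have d_gt0 : (0 < d)%N by rewrite absz_gt0 denq_neq0.
have [k [m [m_gt0 numq_r]]] := int_mulS_sub_mul (numq r) d_gt0.
have r_frac : ratr r = ((k * d.+1)%:R - (m * d)%:R) / d%:R :> R.
  by rewrite [LHS]/ratr numq_r rmorphB /d natr_absz gtr0_norm ?denq_gt0.
have r_inv : ratr r = (ratr q - 1)^-1 :> R by rewrite fmorphV rmorphB rmorph1.
rewrite r_inv !natrM -natr1 in r_frac.
set Q := ratr q in Q_neq0 Q1_neq0 r_frac *.
have d_neq0 : d%:R != 0 :> R by rewrite pnatr_eq0 -lt0n.
have cast_s : (d.*2.+2)%:R = 2 * d%:R + 2 :> R by rewrite -addn2 natrD -mul2n natrM.
(* With [S = 1/Q] the two vertex equations force the weights below, and the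
   remaining condition [k s al + m be = S] becomes [(k(d+1) - md)/d = 1/(Q-1)]. *)
rewrite -[Q]invrK.
apply: (@multipartite_realizable R k (d.*2.+2) m ((1 - Q^-1) / d.*2%:R) (Q^-1 - 1)) => //.
- by rewrite invr_eq0.
- rewrite natrM cast_s -mul2n natrM.
  transitivity ((1 - Q^-1) * ((k%:R * (d%:R + 1) - m%:R * d%:R) / d%:R)).
    by field; rewrite d_neq0 Q_neq0.
  by rewrite -r_frac; field; rewrite Q_neq0 Q1_neq0.
- by rewrite cast_s -mul2n natrM; field; rewrite d_neq0 Q_neq0.
- by rewrite opprB addrC subrK.
Qed.

Theorem theorem5p2 (R : realType) (q : rat) :
  exists (n : nat) (e : rel 'I_n),
    simple_graph e /\ connected_graph e /\
    @curvature_index_is R n e (Some (ratr q)).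
Proof.
have [->|q_neq0] := eqVneq q 0; first by rewrite rmorph0; exact: realizable_index0.
have [->|q_neq1] := eqVneq q 1; first by rewrite rmorph1; exact: realizable_index1.
exact: realizable_ratr.
Qed.
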